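(* Let $G$ be a finite graph, let $H$ be a connected graph, and let $f$ be a covering projection from $G$ to $H$. Let $S\subseteq V_G$ be a cutset of $G$ and let $A$ be (the vertex set of) a connected component of $G\setminus S$. Then for any two vertices $u,v\in V_H$ it holds that $|f^{-1}(u)\cap A|-|f^{-1}(v)\cap A|\le |S|$.
   Context: A graph is a triple $(V,\Lambda,\iota)$ where $V$ is a set of vertices, $\Lambda=E\cup L\cup S$ is a set of links partitioned into edges, loops and semi-edges, and $\iota$ assigns to each edge a 2-element subset of $V$ and to each loop or semi-edge a single vertex. A covering projection from $G$ to $H$ is a map $f:V_G\cup\Lambda_G\to V_H\cup\Lambda_H$ sending vertices to vertices and links to links such that: for every edge $e$ of $H$ with end-vertices $u,v$, $f^{-1}(e)$ is a perfect matching between $f^{-1}(u)$ and $f^{-1}(v)$; for every loop $l$ of $H$ at $u$, $f^{-1}(l)$ is a disjoint union of cycles (including 2-cycles formed by parallel edges, and loops) spanning $f^{-1}(u)$; for every semi-edge $s$ of $H$ at $u$, $f^{-1}(s)$ is a disjoint union of edges and semi-edges spanning $f^{-1}(u)$. A cutset of $G$ is a set of vertices whose removal disconnects $G$. *)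

From mathcomp Require Import all_boot all_order all_algebra.
Set Implicit Arguments. Unset Strict Implicit. Unset Printing Implicit Defensive.

Inductive lkind := Edge | Loop | Semi.

Definition is_edge (k : lkind) : bool := if k is Edge then true else false.

(* A graph (V, L, iota): every link l has a kind and two "end" slots
   end1 l, end2 l.  For an edge, iota(l) = {end1 l, end2 l}, a 2-element set;
   for a loop or semi-edge, iota(l) = {end1 l} (and end2 l = end1 l). *)
Definition wf_graph (V L : Type) (kind : L -> lkind) (end1 end2 : L -> V) :=
  forall l, if kind l is Edge then end1 l <> end2 l else end1 l = end2 l.

(* Contribution of link l to the degree of vertex x
   (an edge counts once at each end, a loop counts twice, a semi-edge once). *)
Definition mult (V : eqType) (L : Type) (kind : L -> lkind) (end1 end2 : L -> V)
  (l : L) (x : V) : nat :=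
  if kind l is Semi then (end1 l == x : nat)
  else (end1 l == x : nat) + (end2 l == x : nat).

Definition covering
  (VG LG : finType) (kG : LG -> lkind) (e1G e2G : LG -> VG)
  (VH LH : eqType) (kH : LH -> lkind) (e1H e2H : LH -> VH)
  (fV : VG -> VH) (fL : LG -> LH) : Prop :=
  forall e : LH,
  match kH e with
  | Edge =>
      (* f^{-1}(e) is a perfect matching between f^{-1}(u) and f^{-1}(v) *)
      (forall l, fL l = e -> kG l = Edge /\
         ((fV (e1G l) = e1H e /\ fV (e2G l) = e2H e) \/
          (fV (e1G l) = e2H e /\ fV (e2G l) = e1H e))) /\
      (forall x, fV x = e1H e \/ fV x = e2H e ->
         \sum_(l | fL l == e) mult kG e1G e2G l x = 1)
  | Loop =>
      (* f^{-1}(e) is a disjoint union of cycles (edges and loops) spanning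
         f^{-1}(u): a spanning 2-regular subgraph of the fibre *)
      (forall l, fL l = e -> kG l <> Semi /\
         fV (e1G l) = e1H e /\ fV (e2G l) = e1H e) /\
      (forall x, fV x = e1H e ->
         \sum_(l | fL l == e) mult kG e1G e2G l x = 2)
  | Semi =>
      (* f^{-1}(e) is a disjoint union of edges and semi-edges spanning
         f^{-1}(u) *)
      (forall l, fL l = e -> kG l <> Loop /\
         fV (e1G l) = e1H e /\ fV (e2G l) = e1H e) /\
      (forall x, fV x = e1H e ->
         \sum_(l | fL l == e) mult kG e1G e2G l x = 1)
  end.

(* Adjacency via edges (loops and semi-edges do not affect connectivity). *)
Definition adj (V L : Type) (kind : L -> lkind) (end1 end2 : L -> V) (x y : V) : Prop :=
  exists l, kind l = Edge /\
    ((end1 l = x /\ end2 l = y) \/ (end1 l = y /\ end2 l = x)).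

Inductive walk (V : Type) (R : V -> V -> Prop) : V -> V -> Prop :=
| walk_refl x : walk R x x
| walk_step x y z : R x y -> walk R y z -> walk R x z.

Definition connected_graph (V L : Type) (kind : L -> lkind) (end1 end2 : L -> V) :=
  forall x y : V, walk (adj kind end1 end2) x y.

Definition adjS (V L : finType) (kind : L -> lkind) (end1 end2 : L -> V)
  (S : {set V}) : rel V :=
  fun x y => [&& x \notin S, y \notin S &
    [exists l, is_edge (kind l) &&
      (((end1 l == x) && (end2 l == y)) || ((end1 l == y) && (end2 l == x)))]].

Definition cutset (V L : finType) (kind : L -> lkind) (end1 end2 : L -> V)
  (S : {set V}) : Prop :=
  exists x y, [/\ x \notin S, y \notin S & ~~ connect (adjS kind end1 end2 S) x y].

Definition component_of (V L : finType) (kind : L -> lkind) (end1 end2 : L -> V)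
  (S A : {set V}) : Prop :=
  exists a, a \notin S /\ A = [set y | connect (adjS kind end1 end2 S) a y].

From mathcomp Require Import all_boot all_order all_algebra.
From mathcomp Require Import zify.

(* The lifts of an edge uw of H match the fibre of u injectively into the fibre
   of w, and a vertex of the component A is matched to a vertex that is again in
   A unless it lies in S.  So |A ∩ f⁻¹(u)| <= |A ∩ f⁻¹(w)| + |S ∩ f⁻¹(w)| for
   adjacent u, w.  Chaining this along a walk from u to v, each vertex of H needs
   to be charged only once, and the charges |S ∩ f⁻¹(w)| over distinct w add up
   to at most |S| because fibres are disjoint. *)

Set Implicit Arguments. Unset Strict Implicit. Unset Printing Implicit Defensive.

Lemma walk_leq_add_sum_mem (T : eqType) (R : T -> T -> Prop) (a b : T -> nat) :
    (forall x y, R x y -> a x <= a y + b y) ->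
  forall x z, walk R x z ->
  exists V : seq T, [/\ uniq V, x \in V &
    forall t, t \in V -> a t <= a z + \sum_(s <- V | s != t) b s].
Proof.
move=> Rab x z; elim=> {x z} [z | x y z Rxy _ [V [uV yV IH]]].
  exists [:: z]; split=> [//|//|t]; first exact: mem_head.
  by rewrite mem_seq1 => /eqP->; rewrite big_cons big_nil eqxx /= addn0.
have [xV | xNV] := boolP (x \in V); first by exists V.
exists (x :: V); split=> [/=|/=|t]; [by rewrite xNV | exact: mem_head |].
rewrite in_cons big_cons => /predU1P[-> | tV].
  have sumV : \sum_(s <- V | s != x) b s = \sum_(s <- V) b s.
    rewrite big_seq_cond [RHS]big_seq; apply: eq_bigl => s.
    by case: (s =P x) => [->|_]; rewrite ?(negPf xNV) ?andbT.
  rewrite eqxx sumV (bigD1_seq y) //=.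
  by have := IH y yV; have := Rab x y Rxy; lia.
by have := IH t tV; case: (x != t); lia.
Qed.

Lemma walk_leq_add_sum (T : eqType) (R : T -> T -> Prop) (a b : T -> nat) x z :
    (forall x y, R x y -> a x <= a y + b y) -> walk R x z ->
  exists2 V : seq T, uniq V & a x <= a z + \sum_(s <- V) b s.
Proof.
move=> Rab /(walk_leq_add_sum_mem Rab) [V [uV xV /(_ x xV) le_ax]]; exists V => //.
by apply: leq_trans le_ax _; rewrite leq_add2l [X in _ <= X](bigID (fun s => s != x)) /= leq_addr.
Qed.

Lemma sum_card_fibres_le (V : finType) (W : eqType) (f : V -> W) (X : {set V}) (s : seq W) :
  uniq s -> \sum_(w <- s) #|[set x in X | f x == w]| <= #|X|.
Proof.
move=> us; rewrite -sum1_card.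
have cardE w : #|[set x in X | f x == w]| = \sum_(x in X) (f x == w).
  rewrite -sum1_card big_mkcond [RHS]big_mkcond; apply: eq_bigr => x _.
  by rewrite inE; case: (x \in X); case: (f x == w).
under eq_bigr => w _ do rewrite cardE.
rewrite exchange_big /=; apply: leq_sum => x _.
have -> : \sum_(w <- s) (f x == w) = count_mem (f x) s.
  rewrite -sum1_count [RHS]big_mkcond; apply: eq_bigr => w _ /=.
  by rewrite eq_sym; case: (w == f x).
by rewrite (count_uniq_mem _ us) leq_b1.
Qed.

Section Incidence.

Variables (V : eqType) (L : Type) (end1 end2 : L -> V).

Definition incident (l : L) (x : V) : bool := (end1 l == x) || (end2 l == x).

Definition other_end (l : L) (x : V) : V := if end1 l == x then end2 l else end1 l.

Lemma incident_other_end l x : incident l (other_end l x).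
Proof. by rewrite /incident /other_end; case: ifP; rewrite eqxx ?orbT. Qed.

Lemma other_endK l x : incident l x -> other_end l (other_end l x) = x.
Proof.
rewrite /incident /other_end; have [-> _ | _ /= /eqP <-] := eqVneq (end1 l) x.
  by case: eqP.
by rewrite eqxx.
Qed.

Lemma mult_edge_gt0 (kind : L -> lkind) l x :
  kind l = Edge -> (0 < mult kind end1 end2 l x) = incident l x.
Proof. by rewrite /mult /incident => ->; case: (end1 l == x); case: (end2 l == x). Qed.

End Incidence.

Section Component.

Variables (V L : finType) (kind : L -> lkind) (end1 end2 : L -> V) (S A : {set V}).
Hypothesis compA : component_of kind end1 end2 S A.

Lemma component_disjoint x : x \in A -> x \notin S.
Proof.
have [a [aNS ->]] := compA; rewrite inE => /connectP[p pth ->].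
case/lastP: p pth => [|p y] //=.
by rewrite last_rcons rcons_path => /andP[_ /and3P[]].
Qed.

Lemma component_closed x y : x \in A -> adjS kind end1 end2 S x y -> y \in A.
Proof.
have [a [_ ->]] := compA; rewrite !inE => ax xy.
exact: connect_trans ax (connect1 xy).
Qed.

End Component.

Section EdgeLift.

Variables (VG LG : finType) (kG : LG -> lkind) (e1G e2G : LG -> VG).
Variables (VH LH : eqType) (kH : LH -> lkind) (e1H e2H : LH -> VH).
Variables (fV : VG -> VH) (fL : LG -> LH).
Hypothesis covf : covering kG e1G e2G kH e1H e2H fV fL.

Variables (e : LH) (w w' : VH).
Hypothesis ke : kH e = Edge.
Hypothesis ends_e : (e1H e = w /\ e2H e = w') \/ (e1H e = w' /\ e2H e = w).

Local Notation incident := (incident e1G e2G).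
Local Notation other_end := (other_end e1G e2G).

Lemma edge_lift_kind l : fL l = e -> kG l = Edge.
Proof. by have := covf e; rewrite ke /= => -[lifts _] /lifts[]. Qed.

Lemma fV_other_end l x :
  fL l = e -> incident l x -> fV x = w -> fV (other_end l x) = w'.
Proof.
have := covf e; rewrite ke /= => -[lifts _] /lifts[_ ends_l].
rewrite /incident /other_end.
have [<- _ | _ /= /eqP <-] := eqVneq (e1G l) x; by case: ends_e ends_l => -[<- <-] [] [-> ->].
Qed.

Lemma unique_edge_lift x : fV x = w \/ fV x = w' ->
  exists l, [/\ fL l == e, incident l x & forall j, fL j == e -> incident j x -> j = l].
Proof.
move=> fx; have := covf e; rewrite ke /= => -[_ /(_ x) sum1].
have fx' : fV x = e1H e \/ fV x = e2H e by case: ends_e fx => -[-> ->]; tauto.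
move/(_ fx')/eqP/sum_nat_eq1: sum1 => [l [le ml1 others]].
exists l; split=> //; first by rewrite -(mult_edge_gt0 _ _ _ (edge_lift_kind (eqP le))) ml1.
move=> j je; rewrite -(mult_edge_gt0 _ _ _ (edge_lift_kind (eqP je))).
by apply: contraTeq => /others ->.
Qed.

(* The default [x] is junk: on the fibre of [w] a lift of [e] always exists. *)
Definition edge_lift_end (x : VG) : VG :=
  if [pick l | (fL l == e) && incident l x] is Some l then other_end l x else x.

Lemma edge_lift_endP x : fV x = w ->
  exists l, [/\ fL l == e, incident l x & edge_lift_end x = other_end l x].
Proof.
move=> fx; rewrite /edge_lift_end; case: pickP => [l /andP[le lx] | none].
  by exists l.
have [l [le lx _]] := unique_edge_lift (or_introl fx).
by move: (none l); rewrite le lx.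
Qed.

Lemma fV_edge_lift_end x : fV x = w -> fV (edge_lift_end x) = w'.
Proof.
move=> fx; have [l [/eqP le lx ->]] := edge_lift_endP fx.
exact: fV_other_end.
Qed.

Lemma edge_lift_end_inj : {in [pred x | fV x == w] &, injective edge_lift_end}.
Proof.
move=> x1 x2 /eqP fx1 /eqP fx2 eq_end.
have [l1 [l1e l1x1 end1]] := edge_lift_endP fx1.
have [l2 [l2e l2x2 end2]] := edge_lift_endP fx2.
have [l [_ _ uniq_l]] := unique_edge_lift (or_intror (fV_edge_lift_end fx1)).
have l1y : incident l1 (edge_lift_end x1) by rewrite end1 incident_other_end.
have l2y : incident l2 (edge_lift_end x1) by rewrite eq_end end2 incident_other_end.
have l12 : l1 = l2 by rewrite (uniq_l l1 l1e l1y) (uniq_l l2 l2e l2y).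
by rewrite -(other_endK l1x1) -end1 eq_end end2 l12 (other_endK l2x2).
Qed.

Lemma adjS_edge_lift_end (S : {set VG}) x : fV x = w ->
  x \notin S -> edge_lift_end x \notin S -> adjS kG e1G e2G S x (edge_lift_end x).
Proof.
move=> fx xNS yNS; rewrite /adjS xNS yNS /=.
have [l [/eqP le lx ->]] := edge_lift_endP fx.
apply/existsP; exists l; rewrite (edge_lift_kind le) /=.
by move: lx; rewrite /incident /other_end; case: eqP => [->|_ /eqP ->]; rewrite !eqxx ?orbT.
Qed.

Lemma card_fibre_edge (S A : {set VG}) : component_of kG e1G e2G S A ->
  #|[set x in A | fV x == w]| <= #|[set x in A | fV x == w']| + #|[set x in S | fV x == w']|.
Proof.
move=> compA.
have inj : {in [set x in A | fV x == w] &, injective edge_lift_end}.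
  by move=> x1 x2; rewrite !inE => /andP[_ ?] /andP[_ ?]; apply: edge_lift_end_inj.
rewrite -(card_in_imset inj); apply: leq_trans (leq_card_setU _ _).
apply/subset_leq_card/subsetP => y /imsetP[x].
rewrite inE => /andP[xA /eqP fx] ->{y}; rewrite !inE fV_edge_lift_end // eqxx !andbT.
have [_ | yNS] := boolP (edge_lift_end x \in S); rewrite ?orbT // orbF.
apply: (component_closed compA xA).
exact: adjS_edge_lift_end fx (component_disjoint compA xA) yNS.
Qed.

End EdgeLift.

Theorem mainTheorem2
  (VG LG : finType) (kG : LG -> lkind) (e1G e2G : LG -> VG)
  (VH LH : eqType) (kH : LH -> lkind) (e1H e2H : LH -> VH)
  (fV : VG -> VH) (fL : LG -> LH)
  (wfG : wf_graph kG e1G e2G) (wfH : wf_graph kH e1H e2H)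
  (connH : connected_graph kH e1H e2H)
  (covf : covering kG e1G e2G kH e1H e2H fV fL)
  (S A : {set VG})
  (cutS : cutset kG e1G e2G S)
  (compA : component_of kG e1G e2G S A)
  (u v : VH) :
  (((#|[set x in A | fV x == u]| : int) - (#|[set x in A | fV x == v]| : int)
    <= (#|S| : int))%R).
Proof.
have step w w' : adj kH e1H e2H w w' ->
    #|[set x in A | fV x == w]| <= #|[set x in A | fV x == w']| + #|[set x in S | fV x == w']|.
  by case=> e [ke ends_e]; apply: (card_fibre_edge covf ke ends_e compA).
have [V uV le_uv] := walk_leq_add_sum step (connH u v).
have := sum_card_fibres_le fV S uV.
lia.
Qed.
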